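(* For every graph $G$ on $[n]$ (with $n\ge3$), the scattering matroid $\mathcal S(G)$ has rank at most $2n-3$. For the complete graph $K_n$ this bound is attained: $\mathrm{rank}\,\mathcal S(K_n)=2n-3$.
   Context: $G\subseteq\binom{[n]}{2}$ is a simple graph. The scattering matrix $S_G$ is the $2n\times|G|$ matrix over the field $\mathbb C(x_1,\dots,x_n)$ whose columns are indexed by the edges $ij\in G$ (with $i<j$). In column $ij$: - the entry in row $k\in[n]$ is $1$ if $k\in\{i,j\}$ and $0$ otherwise; - the entry in row $n+i$ is $1/(x_i-x_j)$; - the entry in row $n+j$ is $1/(x_j-x_i)$; - all other entries are $0$. The scattering matroid $\mathcal S(G)$ is the column matroid of $S_G$ over $\mathbb C(x_1,\dots,x_n)$. Its rank is the rank of $S_G$. *)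

From HB Require Import structures.
From mathcomp Require Import all_boot all_algebra.
From mathcomp Require Import complex fraction.
From mathcomp Require Import mpoly.
From mathcomp Require Import Rstruct.
Set Implicit Arguments. Unset Strict Implicit. Unset Printing Implicit Defensive.
Import GRing.Theory.
Local Open Scope ring_scope.

Definition CC : fieldType := complex Rdefinitions.R.

Definition ratfun (n : nat) : fieldType := {fraction {mpoly CC[n]}}.

Definition xvar (n : nat) (i : 'I_n) : ratfun n :=
  FracField.tofrac ('X_i : {mpoly CC[n]}).

Definition simple_graph (n : nat) (G : {set 'I_n * 'I_n}) : Prop :=
  forall e, e \in G -> (e.1 < e.2)%N.

Definition complete_graph (n : nat) : {set 'I_n * 'I_n} :=
  [set e : 'I_n * 'I_n | (e.1 < e.2)%N].

Definition scat_col (n : nat) (e : 'I_n * 'I_n) : 'cV[ratfun n]_(n + n) :=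
  col_mx
    (\col_(k < n) ((k == e.1) || (k == e.2))%:R)
    (\col_(k < n) (if k == e.1 then (xvar e.1 - xvar e.2)^-1
                   else if k == e.2 then (xvar e.2 - xvar e.1)^-1
                   else 0)).

Definition scattering_matrix (n : nat) (G : {set 'I_n * 'I_n})
  : 'M[ratfun n]_(n + n, #|G|) :=
  \matrix_(r, c) scat_col (enum_val c) r ord0.

Definition scattering_rank (n : nat) (G : {set 'I_n * 'I_n}) : nat :=
  \rank (scattering_matrix G).

From HB Require Import structures.
From mathcomp Require Import all_boot all_algebra.
From mathcomp Require Import fraction mpoly.
From mathcomp Require Import ring zify.
Set Implicit Arguments. Unset Strict Implicit. Unset Printing Implicit Defensive.
Import GRing.Theory.
Local Open Scope ring_scope.

(* A row vector [row_mx a b], with a and b indexed by the vertices, kills the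
   column of the edge ij exactly when b_i - b_j = -(a_i + a_j)(x_i - x_j).
   All pairs satisfy this when a = c1 + c2 x and b = c0 - 2 c1 x - c2 x^2, so
   these vectors form a 3-dimensional subspace of the left kernel of every S_G,
   whence rank S_G <= 2n - 3.  For K_n the relation holds for every pair, and
   it forces (a, b) to be of this shape, so the bound is attained. *)

Lemma pair_relation_quadratic (F : fieldType) (T : eqType) (p q : T)
    (a b x : T -> F) :
  p != q -> injective x ->
  (forall i j, i != j -> b i - b j = - (a i + a j) * (x i - x j)) ->
  exists c0 c1 c2 : F, forall k,
    a k = c1 + c2 * x k /\ b k = c0 - 2 * c1 * x k - c2 * x k ^+ 2.
Proof.
move=> pq x_inj E.
have dqp : x q - x p != 0 by rewrite subr_eq0 (inj_eq x_inj) eq_sym.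
(* Summing the relations around the triangle p, k, q shows that a is the
   linear interpolation of its values at p and q. *)
have a_interp k : a k * (x q - x p) = a p * (x q - x k) + a q * (x k - x p).
  have [-> | kp] := eqVneq k p; first ring.
  have [-> | kq] := eqVneq k q; first ring.
  apply/eqP; rewrite -subr_eq0; apply/eqP.
  transitivity ((b p - b k) + (b k - b q) + (b q - b p)); last ring.
  by rewrite E 1?eq_sym // E // E 1?eq_sym //; ring.
have b_from_p k : b k = b p + (a p + a k) * (x p - x k).
  have [-> | kp] := eqVneq k p; first ring.
  apply/eqP; rewrite -subr_eq0; apply/eqP.
  transitivity (- (b p - b k) - (a p + a k) * (x p - x k)); first ring.
  by rewrite E 1?eq_sym //; ring.
pose c2 := (a q - a p) / (x q - x p).
pose c1 := (a p * x q - a q * x p) / (x q - x p).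
have a_affine k : a k = c1 + c2 * x k.
  by apply: (mulIf dqp); rewrite a_interp /c1 /c2; field.
exists (b p + 2 * c1 * x p + c2 * x p ^+ 2), c1, c2 => k; split=> //.
by rewrite b_from_p !a_affine; ring.
Qed.

Lemma sum_supported_on_pair (V : nmodType) (I : finType) (i j : I) (g : I -> V) :
  i != j -> (forall k, k != i -> k != j -> g k = 0) -> \sum_k g k = g i + g j.
Proof.
move=> ij g0; rewrite (bigD1 i) //= (bigD1 j) 1?eq_sym //= big1 ?addr0 //.
by move=> k /andP [ki kj]; apply: g0.
Qed.

Lemma edge_relation_eq0 (F : fieldType) (a1 a2 b1 b2 x1 x2 : F) : x1 != x2 ->
  (a1 + a2 + b1 / (x1 - x2) + b2 / (x2 - x1) == 0) =
    (b1 - b2 == - (a1 + a2) * (x1 - x2)).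
Proof.
move=> x12; have d12 : x1 - x2 != 0 by rewrite subr_eq0.
have -> : a1 + a2 + b1 / (x1 - x2) + b2 / (x2 - x1)
    = (b1 - b2 + (a1 + a2) * (x1 - x2)) / (x1 - x2).
  by field; rewrite d12 -oppr_eq0 opprB d12.
by rewrite mulf_eq0 invr_eq0 (negbTE d12) orbF addr_eq0 mulNr.
Qed.

Section Scattering.
Variable n : nat.
Local Notation F := (ratfun n).
Local Notation x := (@xvar n).

Lemma xvar_inj : injective x.
Proof.
move=> i j /eqP; rewrite /xvar tofrac_eq => /eqP xij.
have := @mcoeffXU n CC i i; rewrite xij !mcoeffXU eqxx.
by case: eqP => // _ /eqP; rewrite eq_sym oner_eq0.
Qed.

Lemma mul_row_mx_scat_col (a b : 'rV[F]_n) (e : 'I_n * 'I_n) : e.1 != e.2 ->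
  (row_mx a b *m scat_col e) 0 0 =
    a 0 e.1 + a 0 e.2 + b 0 e.1 / (x e.1 - x e.2) + b 0 e.2 / (x e.2 - x e.1).
Proof.
move=> e12; rewrite /scat_col mul_row_col !mxE.
rewrite (@sum_supported_on_pair _ _ e.1 e.2) //; last first.
  by move=> k k1 k2; rewrite !mxE (negbTE k1) (negbTE k2) mulr0.
rewrite (@sum_supported_on_pair _ _ e.1 e.2 (fun k => b 0 k * _)) //; last first.
  by move=> k k1 k2; rewrite !mxE (negbTE k1) (negbTE k2) mulr0.
by rewrite !mxE eqxx /= eq_sym (negbTE e12) eqxx orbT !mulr1 addrA.
Qed.

Lemma mul_row_mx_scat_col_eq0 (a b : 'rV[F]_n) (e : 'I_n * 'I_n) : e.1 != e.2 ->
  ((row_mx a b *m scat_col e) 0 0 == 0) =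
    (b 0 e.1 - b 0 e.2 == - (a 0 e.1 + a 0 e.2) * (x e.1 - x e.2)).
Proof.
by move=> e12; rewrite mul_row_mx_scat_col // edge_relation_eq0 // (inj_eq xvar_inj).
Qed.

Lemma mul_scattering_matrix m (A : 'M[F]_(m, n + n)) G r c :
  (A *m scattering_matrix G) r c = (A *m scat_col (enum_val c)) r 0.
Proof. by rewrite !mxE; apply: eq_bigr => s _; rewrite mxE. Qed.

Definition moebius_rows : 'M[F]_(3, n + n) :=
  row_mx (\matrix_(r < 3, k < n) [:: 0; 1; x k]`_r)
         (\matrix_(r < 3, k < n) [:: 1; -2 * x k; - x k ^+ 2]`_r).

Lemma moebius_rows_scat_col e : e.1 != e.2 -> moebius_rows *m scat_col e = 0.
Proof.
move=> e12; apply/matrixP => r c; rewrite ord1 [RHS]mxE.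
have -> : (moebius_rows *m scat_col e) r 0 = (row r moebius_rows *m scat_col e) 0 0.
  by rewrite -row_mul [RHS]mxE.
rewrite /moebius_rows row_row_mx; apply/eqP.
rewrite mul_row_mx_scat_col_eq0 // !mxE.
by case: r => [[|[|[|r]]] hr] //=; apply/eqP; ring.
Qed.

Lemma moebius_sub_kermx G : simple_graph G ->
  (moebius_rows <= kermx (scattering_matrix G))%MS.
Proof.
move=> sG; apply/sub_kermxP/matrixP => r c.
rewrite mul_scattering_matrix moebius_rows_scat_col ?mxE //.
by rewrite neq_ltn sG ?enum_valP.
Qed.

Lemma mul_row3_moebius_rows (c0 c1 c2 : F) :
  \row_(r < 3) [:: c0; c1; c2]`_r *m moebius_rows =
    row_mx (\row_k (c1 + c2 * x k)) (\row_k (c0 - 2 * c1 * x k - c2 * x k ^+ 2)).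
Proof.
rewrite mul_mx_row; congr row_mx; apply/rowP => k;
  rewrite !mxE !big_ord_recl big_ord0 !mxE /=; ring.
Qed.

Lemma row3_eta (c : 'rV[F]_3) :
  exists c0 c1 c2, c = \row_(r < 3) [:: c0; c1; c2]`_r.
Proof.
exists (c 0 0), (c 0 1), (c 0 2).
by apply/rowP => -[[|[|[|r]]] lt_r3] //; rewrite mxE; congr (c 0 _); apply: val_inj.
Qed.

Lemma moebius_rows_free (p q : 'I_n) : p != q -> row_free moebius_rows.
Proof.
move=> pq; apply/inj_row_free => c; have [c0 [c1 [c2 ->]]] := row3_eta c.
rewrite mul_row3_moebius_rows => /eqP; rewrite row_mx_eq0 => /andP[/eqP a0 /eqP b0].
have {}a0 k : c1 + c2 * x k = 0 by have /rowP/(_ k) := a0; rewrite !mxE.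
have {}b0 k : c0 - 2 * c1 * x k - c2 * x k ^+ 2 = 0.
  by have /rowP/(_ k) := b0; rewrite !mxE.
have c2_0 : c2 = 0.
  have : c2 * (x p - x q) = (c1 + c2 * x p) - (c1 + c2 * x q) by ring.
  rewrite !a0 subrr => /eqP.
  by rewrite mulf_eq0 subr_eq0 (inj_eq xvar_inj) (negbTE pq) orbF => /eqP.
have c1_0 : c1 = 0 by rewrite -(a0 p) c2_0 mul0r addr0.
have c0_0 : c0 = 0 by rewrite -(b0 p) c1_0 c2_0 !mulr0 !mul0r !subr0.
by apply/rowP => -[[|[|[|r]]] lt_r3] //; rewrite !mxE.
Qed.

Lemma complete_kernel_relation (a b : 'rV[F]_n) :
  row_mx a b *m scattering_matrix (complete_graph n) = 0 ->
  forall i j, i != j -> b 0 i - b 0 j = - (a 0 i + a 0 j) * (x i - x j).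
Proof.
move=> ab0; suff rel (i j : 'I_n) :
    (i < j)%N -> b 0 i - b 0 j = - (a 0 i + a 0 j) * (x i - x j).
  move=> i j; rewrite neq_ltn => /orP[/rel // | /rel rel_ji].
  by rewrite -opprB rel_ji; ring.
move=> lt_ij; have Kij : (i, j) \in complete_graph n by rewrite inE.
have /matrixP/(_ 0 (enum_rank_in Kij (i, j))) := ab0.
rewrite mul_scattering_matrix enum_rankK_in // [X in _ = X]mxE => /eqP.
by rewrite mul_row_mx_scat_col_eq0 ?neq_ltn ?lt_ij // => /eqP.
Qed.

Lemma kermx_complete_sub_moebius (p q : 'I_n) : p != q ->
  (kermx (scattering_matrix (complete_graph n)) <= moebius_rows)%MS.
Proof.
move=> pq; apply/row_subP => i; set v := row i _.
have /sub_kermxP vS : (v <= kermx (scattering_matrix (complete_graph n)))%MS.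
  exact: row_sub.
rewrite -(hsubmxK v) in vS *; move: (lsubmx v) (rsubmx v) vS => a b ab0.
have [c0 [c1 [c2 abc]]] := pair_relation_quadratic
  (a := fun k => a 0 k) (b := fun k => b 0 k) pq xvar_inj (complete_kernel_relation ab0).
apply/submxP; exists (\row_(r < 3) [:: c0; c1; c2]`_r).
rewrite mul_row3_moebius_rows; congr row_mx; apply/rowP => k; rewrite !mxE.
- exact: (abc k).1.
- exact: (abc k).2.
Qed.

End Scattering.

Theorem mainTheorem7 (n : nat) (hn : (3 <= n)%N) :
  (forall G : {set 'I_n * 'I_n}, simple_graph G ->
     (scattering_rank G <= 2 * n - 3)%N) /\
  scattering_rank (complete_graph n) = (2 * n - 3)%N.
Proof.
have [p [q pq]] : exists p q : 'I_n, p != q.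
  by exists (Ordinal (ltnW (ltnW hn))), (Ordinal (ltnW hn)).
have rank_moebius := eqP (moebius_rows_free pq).
have rank_le (G : {set 'I_n * 'I_n}) :
    simple_graph G -> (3 <= n + n - scattering_rank G)%N.
  move=> sG; rewrite -rank_moebius /scattering_rank -mxrank_ker.
  exact/mxrankS/moebius_sub_kermx.
split=> [G /rank_le | ]; first lia.
have simple_K : simple_graph (complete_graph n) by move=> e; rewrite inE.
have := mxrankS (kermx_complete_sub_moebius pq).
rewrite mxrank_ker rank_moebius; move: (rank_le _ simple_K).
rewrite /scattering_rank; lia.
Qed.
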